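(* Let $n\ge 2$ and $w\in S_n$, and let $P=[C_1,\dots,C_k]$ be a path in the conflated expression graph $\Gamma_w$. If $\tilde p$ and $\tilde p'$ are two lifts of $P$ to $Rex(w)$, then $f(\tilde p)=f(\tilde p')$. In other words, the path morphism $f(P):=f(\tilde p)$ of a path in $\Gamma_w$ is well defined.
   Context: $S_n$ is the symmetric group with simple reflections $s_i=(i\ i+1)$, $1\le i\le n-1$; in words we write $i$ for $s_i$. A reduced expression of $w$ is a word $i_1\cdots i_k$ with $w=s_{i_1}\cdots s_{i_k}$ and $k$ minimal. The rex graph $Rex(w)$ has as vertices the reduced expressions of $w$, with an edge between two reduced expressions that differ by a single braid relation applied to consecutive letters: either $i(i+1)i\leftrightarrow (i+1)i(i+1)$ (an adjacent edge) or $ij\leftrightarrow ji$ with $|i-j|\ge 2$ (a distant edge). Let $R=\mathbb{R}[x_1,\dots,x_n]$, graded with $\deg x_i=2$, with $s_i$ acting by swapping $x_i$ and $x_{i+1}$; $R^{s}$ denotes the $s$-invariants, $B_i=R\otimes_{R^{s_i}}R(1)$, and for a word $i_1\cdots i_k$ the Bott–Samelson bimodule is $B_{i_1}\otimes_R\cdots\otimes_R B_{i_k}$. For $i\ne j$ let $m_{ij}\in\{2,3\}$ be the order of $s_is_j$ and let $f_{ij}:B_iB_jB_i\cdots\to B_jB_iB_j\cdots$ (each with $m_{ij}$ factors) be the unique degree-$0$ $R$-bimodule morphism sending $1\otimes\cdots\otimes 1$ to $1\otimes\cdots\otimes1$. Traversing an edge from $\underline u$ to $\underline v$, where $\underline v$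 is obtained from $\underline u$ by replacing a consecutive subword $iji\cdots$ ($m_{ij}$ letters) by $jij\cdots$, gives the morphism $\mathrm{Id}\otimes f_{ij}\otimes\mathrm{Id}:B_{\underline u}\to B_{\underline v}$. For a path $p$ (a sequence of vertices, consecutive ones joined by an edge) the path morphism $f(p)$ is the composite of the edge morphisms along $p$ (the identity for a one-vertex path). A cloud is an equivalence class of vertices of $Rex(w)$ under the equivalence relation generated by distant edges. The conflated expression graph $\Gamma_w$ has the clouds as vertices, with an edge between two distinct clouds whenever some adjacent edge of $Rex(w)$ joins an element of one to an element of the other; for each such pair of clouds one adjacent edge joining them is fixed (the representative edge), and each cloud $C$ has a fixed representative element $\mathrm{rep}(C)$ (by convention the lexicographically smallest). A lift of a path $P=[C_1,\dots,C_k]$ in $\Gamma_w$ is a path in $Rex(w)$ that starts at $\mathrm{rep}(C_1)$, ends at $\mathrm{rep}(C_k)$, whose adjacent edges are, in order, the representative edges for $\{C_1,C_2\},\dots,\{C_{k-1},C_k\}$, and all of whose other edges are distant edges. *)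

From mathcomp Require Import all_boot all_algebra all_fingroup.
From mathcomp Require Import reals.
From mathcomp Require Import mpoly.
From Stdlib Require Import Relations.

Set Implicit Arguments.
Unset Strict Implicit.
Unset Printing Implicit Defensive.

Import GRing.Theory.
Local Open Scope ring_scope.

(* Letters of words are natural numbers i (standing for s_i), and the  *)
(* symmetric group acts on {1,...,n}.                                  *)

Definition sigma (i : nat) (t : nat) : nat :=
  if t == i then i.+1 else if t == i.+1 then i else t.

Definition prodw (u : seq nat) : nat -> nat :=
  foldr (fun i f => sigma i \o f) id u.

Definition valid_word (n : nat) (u : seq nat) : bool :=
  all (fun i => (0 < i < n)%N) u.

(* u is an expression of w (w acting on {1..n}, written 0-based as 'I_n) *)
Definition expr_of (n : nat) (w : 'S_n) (u : seq nat) : Prop :=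
  valid_word n u /\ forall t : 'I_n, prodw u (nat_of_ord t).+1 = (nat_of_ord (w t)).+1.

Definition isRex (n : nat) (w : 'S_n) (u : seq nat) : Prop :=
  expr_of w u /\ forall u', expr_of w u' -> (size u <= size u')%N.

Definition dedge (u v : seq nat) : Prop :=
  exists a b i j, ((i.+1 < j) || (j.+1 < i))%N /\
    u = a ++ [:: i; j] ++ b /\ v = a ++ [:: j; i] ++ b.

Definition aedge (u v : seq nat) : Prop :=
  exists a b i,
    (u = a ++ [:: i; i.+1; i] ++ b /\ v = a ++ [:: i.+1; i; i.+1] ++ b) \/
    (u = a ++ [:: i.+1; i; i.+1] ++ b /\ v = a ++ [:: i; i.+1; i] ++ b).

Definition rex_dedge (n : nat) (w : 'S_n) (u v : seq nat) : Prop :=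
  isRex w u /\ isRex w v /\ dedge u v.

Definition sameCloud (n : nat) (w : 'S_n) (u v : seq nat) : Prop :=
  clos_refl_trans _ (rex_dedge w) u v.

Definition cloudsAdj (n : nat) (w : 'S_n) (C C' : seq nat) : Prop :=
  exists a b, isRex w a /\ isRex w b /\ sameCloud w a C /\ sameCloud w b C' /\
    aedge a b.

Fixpoint lexle (u v : seq nat) : bool :=
  match u, v with
  | [::], _ => true
  | _ :: _, [::] => false
  | a :: u', b :: v' => (a < b)%N || ((a == b) && lexle u' v')
  end.

Definition isRep (n : nat) (w : 'S_n) (C r : seq nat) : Prop :=
  isRex w r /\ sameCloud w r C /\
  forall v, isRex w v -> sameCloud w v C -> lexle r v.

Definition validRedge (n : nat) (w : 'S_n)
    (E : seq nat -> seq nat -> seq nat * seq nat) : Prop :=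
  forall C C', isRex w C -> isRex w C' -> ~ sameCloud w C C' -> cloudsAdj w C C' ->
    isRex w (E C C').1 /\ isRex w (E C C').2 /\
    sameCloud w (E C C').1 C /\ sameCloud w (E C C').2 C' /\
    aedge (E C C').1 (E C C').2 /\
    (forall D D', isRex w D -> isRex w D' -> sameCloud w D C ->
        sameCloud w D' C' -> E D D' = E C C') /\
    E C' C = ((E C C').2, (E C C').1).

Fixpoint chain (T : Type) (r : T -> T -> Prop) (x : T) (s : seq T) : Prop :=
  match s with
  | [::] => True
  | y :: s' => r x y /\ chain r y s'
  end.

(* A path [C_1, ..., C_k] in Gamma_w, clouds given by members. *)
Definition isGpath (n : nat) (w : 'S_n) (Cs : seq (seq nat)) : Prop :=
  match Cs with
  | [::] => False
  | C :: Cs' => (forall D, D \in Cs -> isRex w D) /\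
      chain (fun D D' => ~ sameCloud w D D' /\ cloudsAdj w D D') C Cs'
  end.

Definition steps (T : Type) (x : T) (s : seq T) : seq (T * T) := zip (x :: s) s.

Fixpoint adjSteps (st es : seq (seq nat * seq nat)) : Prop :=
  match st with
  | [::] => es = [::]
  | (a, b) :: st' =>
      (aedge a b /\ exists es', es = (a, b) :: es' /\ adjSteps st' es') \/
      (dedge a b /\ adjSteps st' es)
  end.

Definition isLift (n : nat) (w : 'S_n) (E : seq nat -> seq nat -> seq nat * seq nat)
    (Cs : seq (seq nat)) (p : seq (seq nat)) : Prop :=
  match Cs, p with
  | C1 :: Cs', v0 :: vs =>
      (forall v, v \in p -> isRex w v) /\
      isRep w C1 v0 /\ isRep w (last C1 Cs') (last v0 vs) /\
      adjSteps (steps v0 vs) [seq E x.1 x.2 | x <- steps C1 Cs']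
  | _, _ => False
  end.

(* B_{i_1} ... B_{i_l} = R (x)_{R^{s_{i_1}}} R (x) ... (x) R is         *)
(* realized as the quotient of the polynomial ring in (l+1) blocks of n *)
(* variables x^{(0)},...,x^{(l)} (variable x^{(b)}_{j+1} has index      *)
(* b*n+j) by the ideal generated by p(x^{(t)}) - p(x^{(t+1)}) for all   *)
(* p in R^{s_{i_{t+1}}}.  Elements are represented by polynomials, and  *)
(* morphisms by maps on representatives; equality is modulo the ideal.  *)

Unset Implicit Arguments.
Section Bimod.
Variables (R : realType) (n : nat).

Definition PR (k : nat) := {mpoly R[k]}.

(* the variable with index t in R[x_0..x_{k-1}] (0 if out of range) *)
Definition varX (k t : nat) : {mpoly R[k]} :=
  if insub t is Some i then 'X_i else 0.

Definition bvar (k b j : nat) : {mpoly R[k]} := varX k (b * n + j).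

(* the action of s_i (1 <= i <= n-1) on R = R[x_1..x_n]: swap x_i, x_{i+1} *)
(* (0-based variable indices i-1 and i)                                   *)
Definition sact (i : nat) (p : {mpoly R[n]}) : {mpoly R[n]} :=
  mmap (@mpolyC n R) (fun j : 'I_n => varX n (sigma i (nat_of_ord j).+1).-1) p.

Definition invariant (i : nat) (p : {mpoly R[n]}) : Prop := sact i p = p.

Definition emb (k b : nat) (p : {mpoly R[n]}) : {mpoly R[k]} :=
  mmap (@mpolyC k R) (fun j : 'I_n => bvar k b j) p.

Definition bsgen (k : nat) (u : seq nat) (g : {mpoly R[k]}) : Prop :=
  exists t (p : {mpoly R[n]}), (t < size u)%N /\ invariant (nth 0%N u t) p /\
    g = emb k t p - emb k t.+1 p.

Definition inIdeal (k : nat) (u : seq nat) (r : {mpoly R[k]}) : Prop :=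
  exists gs rs : seq {mpoly R[k]}, size gs = size rs /\
    (forall g, g \in gs -> bsgen k u g) /\
    r = \sum_(t < size gs) rs`_t * gs`_t.

Definition cong (k : nat) (u : seq nat) (p q : {mpoly R[k]}) : Prop :=
  inIdeal k u (p - q).

Definition mlen (i j : nat) : nat := if (i == j.+1) || (j == i.+1) then 3 else 2.

Fixpoint altw (i j m : nat) : seq nat :=
  if m is m'.+1 then i :: altw j i m' else [::].

(* f : B_{iji..} -> B_{jij..} (m_ij factors, k = (m_ij+1) n variables) is  *)
(* a well-defined degree 0 R-bimodule morphism sending 1 (x)..(x) 1 to     *)
(* 1 (x) .. (x) 1 (degree = twice the polynomial degree; the grading       *)
(* shifts (m_ij) on both sides cancel).                                   *)
Definition isBraidMor (i j : nat) (f : PR ((mlen i j).+1 * n) -> PR ((mlen i j).+1 * n))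
    : Prop :=
  let k := ((mlen i j).+1 * n)%N in
  let U := altw i j (mlen i j) in
  let V := altw j i (mlen i j) in
  [/\ (forall p q, cong k U p q -> cong k V (f p) (f q)),
      (forall p q, cong k V (f (p + q)) (f p + f q)),
      (forall (a b : {mpoly R[n]}) p,
          cong k V (f (emb k 0 a * p * emb k (mlen i j) b)) (emb k 0 a * f p * emb k (mlen i j) b)),
      (forall (d : nat) p, p \is d.-homog -> exists q, q \is d.-homog /\ cong k V (f p) q) &
      cong k V (f 1) 1].

(* Id (x) f (x) Id, with f acting on the tensor factors at letter positions *)
(* s, ..., s+ml-1 (blocks s, ..., s+ml), on B_u with u of length l, k=(l+1)n.*)
Definition partA (k s : nat) (m : 'X_{1..k}) : {mpoly R[k]} :=
  \prod_(t < k | (t %/ n < s)%N) 'X_t ^+ m t.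
Definition partC (k s ml : nat) (m : 'X_{1..k}) : {mpoly R[k]} :=
  \prod_(t < k | (s + ml < t %/ n)%N) 'X_t ^+ m t.
Definition partM (k k' s ml : nat) (m : 'X_{1..k}) : {mpoly R[k']} :=
  \prod_(t < k | (s <= t %/ n <= s + ml)%N) bvar k' (t %/ n - s) (t %% n) ^+ m t.
Definition shiftP (k' k s : nat) (q : {mpoly R[k']}) : {mpoly R[k]} :=
  mmap (@mpolyC k R) (fun t : 'I_k' => bvar k (s + t %/ n) (t %% n)) q.

Definition liftMor (k ml s : nat) (f : PR (ml.+1 * n) -> PR (ml.+1 * n))
    (p : {mpoly R[k]}) : {mpoly R[k]} :=
  \sum_(m <- msupp p)
     p@_m *: (partA k s m * shiftP (ml.+1 * n) k s (f (partM k (ml.+1 * n) s ml m)) * partC k s ml m).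

Definition edgeMor (k : nat)
    (F : forall i j : nat, PR ((mlen i j).+1 * n) -> PR ((mlen i j).+1 * n))
    (u v : seq nat) : {mpoly R[k]} -> {mpoly R[k]} :=
  let s := find (fun t => nth 0%N u t != nth 0%N v t) (iota 0 (size u)) in
  let i := nth 0%N u s in
  let j := nth 0%N v s in
  liftMor k (mlen i j) s (F i j).

Definition pathMor (k : nat)
    (F : forall i j : nat, PR ((mlen i j).+1 * n) -> PR ((mlen i j).+1 * n))
    (p : seq (seq nat)) : {mpoly R[k]} -> {mpoly R[k]} :=
  match p with
  | [::] => id
  | v0 :: vs => fun x => foldl (fun acc st => edgeMor k F st.1 st.2 acc) x (steps v0 vs)
  end.

End Bimod.

(* An element of [B_u] is represented by a polynomial in blocks of variables
   [x^(0), ..., x^(l)], modulo the relations [p(x^(t)) = p(x^(t+1))] for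
   [s_(u_t)]-invariant [p]. The map [Id (x) f (x) Id] sends these relations for
   [u] to relations for [v]: outside the braid window they are unchanged, inside
   they are killed because [f] is well defined. So path morphisms act on classes.
   Next, [x^(b)_t] and [x^(b')_t] are congruent whenever no letter between
   positions [b] and [b'] moves [x_t]. For a distant braid [ij -> ji], the
   bimodule map [f_ij] fixes the outer variables of [B_i B_j], and its middle
   variables equal outer ones; hence the edge morphism is a substitution of
   variables preserving, for each variable, the number of letters moving it that
   precede its block. Any two such substitutions agree on classes, so along
   distant edges the path morphism only depends on the endpoints. Two lifts of a
   path of [Gamma_w] have the same endpoints (representatives are unique) and
   cross the same adjacent edges in the same order, with distant edges in
   between; induction on the adjacent edges concludes. *)

From Pilot Require Import Defs.
From mathcomp Require Import all_boot all_algebra all_fingroup.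
From mathcomp Require Import reals.
From mathcomp Require Import mpoly ssrcomplements.
From mathcomp Require Import zify.

Set Implicit Arguments.
Unset Strict Implicit.
Unset Printing Implicit Defensive.
Import GRing.Theory.
Local Open Scope ring_scope.

Local Notation msubst g := (mmap (@mpolyC _ _) g).

Lemma mulr_sandwich_sum (K : nzRingType) (A : algType K) (I : Type) (r : seq I)
    (c : I -> K) (x y : A) (g : I -> A) :
  \sum_(i <- r) c i *: (x * g i * y) = x * (\sum_(i <- r) c i *: g i) * y.
Proof. by rewrite mulr_sumr mulr_suml; apply: eq_bigr => i _; rewrite scalerAl scalerAr. Qed.

Section BSIdeal.
Variables (R : realType) (n : nat).
Local Notation cg k u := (cong R n k u).

Local Unset Implicit Arguments.
Inductive bs_ideal (k : nat) (u : seq nat) : {mpoly R[k]} -> Prop :=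
| bs_ideal0 : bs_ideal k u 0
| bs_ideal_gen g : bsgen R n k u g -> bs_ideal k u g
| bs_idealD a b : bs_ideal k u a -> bs_ideal k u b -> bs_ideal k u (a + b)
| bs_idealM r a : bs_ideal k u a -> bs_ideal k u (r * a).
Local Set Implicit Arguments.
Arguments bs_ideal0 {k u}.
Arguments bs_ideal_gen {k u g}.
Arguments bs_idealD {k u a b}.
Arguments bs_idealM {k u} r {a}.

Lemma inIdealP k u r : inIdeal R n k u r <-> bs_ideal k u r.
Proof.
split.
  case=> gs [rs [_ [hg ->]]].
  apply: (big_ind (bs_ideal k u)); [exact: bs_ideal0 | by move=> a b; apply: bs_idealD |].
  move=> t _; apply: bs_idealM; case: (ltnP t (size gs)) => ht.
    by apply/bs_ideal_gen/hg; rewrite mem_nth.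
  by rewrite nth_default //; apply: bs_ideal0.
elim=> {r}.
- by exists [::], [::]; rewrite big_ord0.
- move=> g hg; exists [:: g], [:: 1]; split=> //; split.
    by move=> g'; rewrite inE => /eqP ->.
  by rewrite big_ord1 /= mul1r.
- move=> a b _ [gs1 [rs1 [e1 [h1 ->]]]] _ [gs2 [rs2 [e2 [h2 ->]]]].
  exists (gs1 ++ gs2), (rs1 ++ rs2); split; first by rewrite !size_cat e1 e2.
  split; first by move=> g; rewrite mem_cat => /orP [/h1|/h2].
  rewrite size_cat big_split_ord /=; congr (_ + _); apply: eq_bigr => t _.
    by rewrite !nth_cat -e1 ltn_ord.
  by rewrite !nth_cat -e1 ltnNge leq_addr /= addKn.
- move=> r a _ [gs [rs [e [h ->]]]].
  exists gs, (map (fun x => r * x) rs); split; first by rewrite size_map.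
  split=> //; rewrite mulr_sumr; apply: eq_bigr => t _.
  by rewrite (nth_map 0) -?e // mulrA.
Qed.

Lemma bs_idealN k u a : bs_ideal k u a -> bs_ideal k u (- a).
Proof. by rewrite -mulN1r; apply: bs_idealM. Qed.

Lemma congP k u p q : cg k u p q <-> bs_ideal k u (p - q).
Proof. exact: inIdealP. Qed.

Lemma cong_refl k u p : cg k u p p.
Proof. by apply/congP; rewrite subrr; apply: bs_ideal0. Qed.

Lemma cong_sym k u p q : cg k u p q -> cg k u q p.
Proof. by move/congP/bs_idealN => h; apply/congP; rewrite -opprB. Qed.

Lemma cong_trans k u p q r : cg k u p q -> cg k u q r -> cg k u p r.
Proof.
move=> /congP h1 /congP h2; apply/congP.
by have := bs_idealD h1 h2; rewrite addrA subrK.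
Qed.

Lemma congD k u p q p' q' : cg k u p q -> cg k u p' q' -> cg k u (p + p') (q + q').
Proof.
move=> /congP h1 /congP h2; apply/congP.
by have := bs_idealD h1 h2; rewrite addrACA opprD.
Qed.

Lemma congMl k u r p q : cg k u p q -> cg k u (r * p) (r * q).
Proof. by move/congP/(bs_idealM r) => h; apply/congP; rewrite -mulrBr. Qed.

Lemma congMr k u r p q : cg k u p q -> cg k u (p * r) (q * r).
Proof. by rewrite ![_ * r]mulrC; apply: congMl. Qed.

Lemma congM k u p q p' q' : cg k u p q -> cg k u p' q' -> cg k u (p * p') (q * q').
Proof. by move=> h1 h2; apply: cong_trans (congMr _ h1) (congMl _ h2). Qed.

Lemma congZ k u (c : R) p q : cg k u p q -> cg k u (c *: p) (c *: q).
Proof. by rewrite -!mul_mpolyC; apply: congMl. Qed.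

Lemma congX k u p q e : cg k u p q -> cg k u (p ^+ e) (q ^+ e).
Proof.
move=> h; elim: e => [|e ih]; first by rewrite !expr0; apply: cong_refl.
by rewrite !exprS; apply: congM.
Qed.

Lemma cong_sum k u (I : Type) (r : seq I) (P : pred I) (f g : I -> {mpoly R[k]}) :
  (forall i, P i -> cg k u (f i) (g i)) ->
  cg k u (\sum_(i <- r | P i) f i) (\sum_(i <- r | P i) g i).
Proof.
move=> h; elim/big_rec2: _; first exact: cong_refl.
by move=> i a b hi hab; apply: congD=> //; apply: h.
Qed.

Lemma cong_prod k u (I : Type) (r : seq I) (P : pred I) (f g : I -> {mpoly R[k]}) :
  (forall i, P i -> cg k u (f i) (g i)) ->
  cg k u (\prod_(i <- r | P i) f i) (\prod_(i <- r | P i) g i).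
Proof.
move=> h; elim/big_rec2: _; first exact: cong_refl.
by move=> i a b hi hab; apply: congM=> //; apply: h.
Qed.

Lemma cong_emb k u t P : (t < size u)%N -> Defs.invariant R n (nth 0%N u t) P ->
  cg k u (emb R n k t P) (emb R n k t.+1 P).
Proof. by move=> ht hP; apply/congP/bs_ideal_gen; exists t, P. Qed.

Lemma cong_mmap k k' u (s1 s2 : 'I_k' -> {mpoly R[k]}) (P : {mpoly R[k']}) :
  (forall i, cg k u (s1 i) (s2 i)) ->
  cg k u (msubst s1 P) (msubst s2 P).
Proof.
move=> h; apply: cong_sum=> m _; apply: congMl.
by apply: cong_prod=> i _; apply: congX.
Qed.

End BSIdeal.

Section Substitution.
Variable R : comNzRingType.

Lemma mmap_var k k' (g : 'I_k -> {mpoly R[k']}) (i : 'I_k) : msubst g 'X_i = g i.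
Proof. by rewrite mmapX mmap1U. Qed.

Lemma mmap_comp k1 k2 k3 (g1 : 'I_k1 -> {mpoly R[k2]}) (g2 : 'I_k2 -> {mpoly R[k3]}) p :
  msubst g2 (msubst g1 p) = msubst (fun i => msubst g2 (g1 i)) p.
Proof.
rewrite [mmap _ g1 p]/mmap raddf_sum /=; rewrite [RHS]/mmap; apply: eq_bigr=> m _.
rewrite rmorphM /= mmapC rmorph_prod /=; congr (_ * _); apply: eq_bigr=> i _.
by rewrite rmorphXn.
Qed.

Lemma eq_mmap k1 k2 (g1 g2 : 'I_k1 -> {mpoly R[k2]}) p :
  g1 =1 g2 -> msubst g1 p = msubst g2 p.
Proof. by move=> e; apply: eq_bigr=> m _; rewrite (mmap1_eq _ e). Qed.

Lemma mmap_id k (p : {mpoly R[k]}) : msubst (fun i => 'X_i) p = p.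
Proof.
rewrite {2}(mpolyE p) /mmap; apply: eq_bigr=> m _.
by rewrite mmap1_id mul_mpolyC.
Qed.

Lemma mmap_const1X k k' (m : 'X_{1..k}) :
  msubst (fun _ : 'I_k => 1 : {mpoly R[k']}) 'X_[m] = 1.
Proof. by rewrite mmapX /mmap1 big1 // => t _; rewrite expr1n. Qed.

Lemma mmap_condX k k' (c : bool) (g : 'I_k -> {mpoly R[k']}) (m : 'X_{1..k}) :
  msubst (fun t => if c then g t else 1) 'X_[m] =
  if c then msubst g 'X_[m] else 1.
Proof. by case: c; rewrite ?mmap_const1X. Qed.

Lemma prod_mmap1 k k' (P : pred 'I_k) (g : 'I_k -> {mpoly R[k']}) (m : 'X_{1..k}) :
  \prod_(t < k | P t) g t ^+ m t = mmap1 (fun t => if P t then g t else 1) m.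
Proof.
rewrite /mmap1 big_mkcond /=; apply: eq_bigr=> t _.
by case: (P t); rewrite ?expr1n.
Qed.

Lemma mmapX_mul3 k k' (g1 g2 g3 : 'I_k -> {mpoly R[k']}) (m : 'X_{1..k}) :
  msubst g1 'X_[m] * msubst g2 'X_[m] * msubst g3 'X_[m] =
  msubst (fun t => g1 t * g2 t * g3 t) 'X_[m].
Proof.
by rewrite !mmapX /mmap1 -!big_split /=; apply: eq_bigr => t _; rewrite !exprMn.
Qed.

Definition is_monomial k (q : {mpoly R[k]}) := exists m, q = 'X_[m].

Lemma is_monomialM k (p q : {mpoly R[k]}) :
  is_monomial p -> is_monomial q -> is_monomial (p * q).
Proof. by case=> m1 -> [m2 ->]; exists (m1 + m2)%MM; rewrite mpolyXD. Qed.

Lemma is_monomial_mmap1 k k' (g : 'I_k -> {mpoly R[k']}) (m : 'X_{1..k}) :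
  (forall t, is_monomial (g t)) -> is_monomial (mmap1 g m).
Proof.
move=> hg; apply: (big_ind (@is_monomial k')).
- by exists 0%MM; rewrite mpolyX0.
- exact: is_monomialM.
by move=> t _; have [mt ->] := hg t; exists (mt *+ m t)%MM; rewrite mpolyXn.
Qed.

End Substitution.

Section Blocks.
Variables (R : realType) (n : nat).

Lemma varX_lt k t (h : (t < k)%N) : varX R k t = 'X_(Ordinal h).
Proof. by rewrite /varX insubT. Qed.

Lemma varX_ord k (i : 'I_k) : varX R k i = 'X_i.
Proof. by rewrite /varX valK. Qed.

Lemma bvar_index_lt k b j : (j < n)%N -> (b.+1 * n <= k)%N -> (b * n + j < k)%N.
Proof. by move=> hj; rewrite mulSn; lia. Qed.

Lemma block_divn b j : (j < n)%N -> ((b * n + j) %/ n = b)%N.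
Proof. by move=> hj; rewrite divnMDl ?divn_small ?addn0 // (leq_ltn_trans _ hj). Qed.

Lemma block_modn b j : (j < n)%N -> ((b * n + j) %% n = j)%N.
Proof. by move=> hj; rewrite modnMDl modn_small. Qed.

Lemma bvarE k b j (h : (b * n + j < k)%N) : bvar R n k b j = 'X_(Ordinal h).
Proof. exact: varX_lt. Qed.

Lemma bvar_divmod k (t : 'I_k) : bvar R n k (t %/ n) (t %% n) = 'X_t.
Proof. by rewrite /bvar -divn_eq varX_ord. Qed.

Lemma mmap_bvar k k' (g : 'I_k -> {mpoly R[k']}) b j (h : (b * n + j < k)%N) :
  msubst g (bvar R n k b j) = g (Ordinal h).
Proof. by rewrite bvarE mmap_var. Qed.

Lemma bvar_emb k b t (ht : (t < n)%N) : bvar R n k b t = emb R n k b 'X_(Ordinal ht).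
Proof. by rewrite /emb mmap_var. Qed.

Lemma block_width_gt0 k m (t : 'I_k) : k = (m * n)%N -> (0 < n)%N.
Proof.
move=> hk; rewrite lt0n; apply/eqP => n0.
by move: (ltn_ord t); rewrite [X in (_ < X)%N]hk n0 muln0.
Qed.

Lemma block_ord_le k m (t : 'I_k) : k = (m.+1 * n)%N -> (t %/ n <= m)%N.
Proof.
move=> hk; have hn := block_width_gt0 t hk.
by rewrite -ltnS ltn_divLR // -hk ltn_ord.
Qed.

Lemma emb1 k b : emb R n k b 1 = 1.
Proof. by rewrite /emb rmorph1. Qed.

Lemma embC k b c : emb R n k b c%:MP = c%:MP.
Proof. by rewrite /emb mmapC. Qed.

Lemma embM k b p q : emb R n k b (p * q) = emb R n k b p * emb R n k b q.
Proof. by rewrite /emb rmorphM. Qed.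

Lemma emb_sum k b (P : {mpoly R[n]}) :
  emb R n k b P = \sum_(mu <- msupp P) P@_mu *: emb R n k b 'X_[mu].
Proof.
rewrite /emb {1}(mpolyE P) raddf_sum /=; apply: eq_bigr=> mu _.
by rewrite mmapZ mul_mpolyC.
Qed.

Lemma mmap_emb k k' b (g : 'I_k -> {mpoly R[k']}) (hb : (b.+1 * n <= k)%N) P :
  msubst g (emb R n k b P) =
  msubst (fun j => g (Ordinal (bvar_index_lt (ltn_ord j) hb))) P.
Proof. by rewrite /emb mmap_comp; apply: eq_mmap => j; exact: mmap_bvar. Qed.

Lemma is_monomial_emb k b (mu : 'X_{1..n}) : (b.+1 * n <= k)%N ->
  is_monomial (emb R n k b 'X_[mu]).
Proof.
move=> hb; rewrite /emb mmapX; apply: is_monomial_mmap1 => j.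
have hj := bvar_index_lt (ltn_ord j) hb.
by rewrite (bvarE hj); exists U_(Ordinal hj)%MM.
Qed.

End Blocks.

(* [touches t l]: the letter [s_l] moves the variable [x_(t+1)] (variables are
   indexed from 0). *)
Definition touches (t l : nat) : bool := (l == t.+1) || (l == t).

Definition ntouch (u : seq nat) (b t : nat) : nat := count (touches t) (take b u).

Lemma touches_distant i j t : ((i.+1 < j) || (j.+1 < i))%N -> touches t i -> ~~ touches t j.
Proof.
by rewrite /touches => hij /orP [/eqP e1|/eqP e1]; apply/negP=> /orP [/eqP e2|/eqP e2]; lia.
Qed.

Section Segments.
Variables (R : realType) (n : nat).
Local Notation cg k u := (cong R n k u).

Lemma invariant_var l (t : 'I_n) : ~~ touches t l -> Defs.invariant R n l 'X_t.
Proof.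
rewrite /touches negb_or => /andP [h1 h2].
rewrite /Defs.invariant /sact mmap_var /sigma eq_sym (negbTE h1) eqSS eq_sym (negbTE h2).
exact: varX_ord.
Qed.

Lemma cong_bvar_untouched k u b1 b2 t : (t < n)%N -> (b1 <= b2 <= size u)%N ->
  (forall c, (b1 <= c < b2)%N -> ~~ touches t (nth 0%N u c)) ->
  cg k u (bvar R n k b1 t) (bvar R n k b2 t).
Proof.
move=> ht; elim: b2 => [|b2 ih] /andP [h12 hsz] hc.
  by move: h12; rewrite leqn0 => /eqP ->; apply: cong_refl.
move: h12; rewrite leq_eqVlt => /orP [/eqP ->|h]; first exact: cong_refl.
apply: (cong_trans (ih _ _)); first by rewrite -ltnS h ltnW.
  by move=> c /andP [c1 c2]; apply: hc; rewrite c1 ltnW.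
rewrite !(bvar_emb R _ _ ht); apply: cong_emb => //.
by apply: invariant_var; apply: hc; rewrite leqnn -ltnS h.
Qed.

Lemma cong_bvar_ntouch k u b1 b2 t : (t < n)%N -> (b1 <= size u)%N -> (b2 <= size u)%N ->
  ntouch u b1 t = ntouch u b2 t -> cg k u (bvar R n k b1 t) (bvar R n k b2 t).
Proof.
move=> ht.
wlog h12 : b1 b2 / (b1 <= b2)%N.
  move=> hw h1 h2 he; case: (leqP b1 b2) => h; first exact: hw.
  by apply: cong_sym; apply: hw => //; apply: ltnW.
move=> h1 h2; rewrite /ntouch.
have -> : take b2 u = take b1 u ++ take (b2 - b1) (drop b1 u).
  by rewrite -{1}(cat_take_drop b1 u) take_cat size_takel // ltnNge h12.
rewrite count_cat -{1}[count _ (take b1 u)]addn0 => /eqP; rewrite eqn_add2l eq_sym.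
move=> /eqP hz0.
have /hasPn hz : ~~ has (touches t) (take (b2 - b1) (drop b1 u)) by rewrite has_count hz0.
apply: cong_bvar_untouched => //; first by rewrite h12.
move=> c /andP [c1 c2].
have hc : (c - b1 < size (take (b2 - b1) (drop b1 u)))%N.
  by rewrite size_take size_drop; case: ifP => _; rewrite ltn_sub2rE // (leq_trans c2).
by have := hz _ (mem_nth 0%N hc); rewrite nth_take ?ltn_sub2rE // nth_drop subnKC.
Qed.

Definition ntouch_subst k (u v : seq nat) (phi : 'I_k -> {mpoly R[k]}) :=
  forall t : 'I_k, exists bb, [/\ (bb <= size v)%N, phi t = bvar R n k bb (t %% n)
     & ntouch v bb (t %% n) = ntouch u (t %/ n) (t %% n)].

Lemma ntouch_subst_id k u : k = ((size u).+1 * n)%N -> ntouch_subst u u (fun t : 'I_k => 'X_t).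
Proof. by move=> hk t; exists (t %/ n)%N; rewrite bvar_divmod (block_ord_le t hk). Qed.

Lemma ntouch_subst_comp k u v w psi phi : k = ((size v).+1 * n)%N ->
  ntouch_subst u v psi -> ntouch_subst v w phi ->
  ntouch_subst u w (fun t : 'I_k => msubst phi (psi t)).
Proof.
move=> hk hpsi hphi t; have [b1 [hb1 e1 s1]] := hpsi t.
have ht : (t %% n < n)%N by rewrite ltn_mod (block_width_gt0 t hk).
have hid : (b1 * n + t %% n < k)%N.
  by apply: bvar_index_lt; rewrite // hk leq_mul2r ltnS hb1 orbT.
have [b2 [hb2 e2 s2]] := hphi (Ordinal hid).
move: e2 s2; rewrite /= block_modn // block_divn // => e2 s2.
by exists b2; rewrite e1 (mmap_bvar _ hid) e2 s2 s1.
Qed.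

Lemma ntouch_subst_cong k u v phi1 phi2 x : k = ((size v).+1 * n)%N ->
  ntouch_subst u v phi1 -> ntouch_subst u v phi2 ->
  cg k v (msubst phi1 x) (msubst phi2 x).
Proof.
move=> hk h1 h2; apply: cong_mmap => t.
have [b1 [hb1 -> e1]] := h1 t; have [b2 [hb2 -> e2]] := h2 t.
by apply: cong_bvar_ntouch; rewrite ?ltn_mod ?(block_width_gt0 t hk) // e1 e2.
Qed.

End Segments.

Section LinearExtension.
Variables (R : nzRingType) (k : nat) (L : 'X_{1..k} -> {mpoly R[k]}).

Definition mlinext (p : {mpoly R[k]}) := \sum_(m <- msupp p) p@_m *: L m.

Lemma mlinextE p i : (msize p <= i)%N ->
  mlinext p = \sum_(m : 'X_{1..k < i}) p@_m *: L m.
Proof.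
move=> le_pi; rewrite /mlinext (big_mksub 'X_{1..k < i}) ?msupp_uniq //=; last first.
  by move=> x /msize_mdeg_lt /leq_trans; apply.
by rewrite big_rmcond //= => j /memN_msupp_eq0 ->; rewrite scale0r.
Qed.

Lemma mlinextD p q : mlinext (p + q) = mlinext p + mlinext q.
Proof.
pose i := maxn (msize p) (msize q).
rewrite !(@mlinextE _ i) ?leq_maxl ?leq_maxr ?(leq_trans (msizeD_le _ _)) //.
by rewrite -big_split /=; apply: eq_bigr=> m _; rewrite mcoeffD scalerDl.
Qed.

Lemma mlinextZ c p : mlinext (c *: p) = c *: mlinext p.
Proof.
rewrite !(@mlinextE _ (msize p)) ?msizeZ_le // scaler_sumr.
by apply: eq_bigr=> m _; rewrite mcoeffZ scalerA.
Qed.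

Lemma mlinext0 : mlinext 0 = 0.
Proof. by rewrite /mlinext msupp0 big_nil. Qed.

Lemma mlinextB p q : mlinext (p - q) = mlinext p - mlinext q.
Proof. by rewrite mlinextD -scaleN1r mlinextZ scaleN1r. Qed.

Lemma mlinextX m : mlinext 'X_[m] = L m.
Proof. by rewrite /mlinext msuppX big_seq1 mcoeffX eqxx scale1r. Qed.

Lemma mlinext_sum (I : Type) (r : seq I) (f : I -> {mpoly R[k]}) :
  mlinext (\sum_(i <- r) f i) = \sum_(i <- r) mlinext (f i).
Proof. by elim/big_rec2: _ => [|i a b _ <-]; rewrite ?mlinext0 ?mlinextD. Qed.

End LinearExtension.

Section Lift.
Variables (R : realType) (n : nat) (a b U V : seq nat) (ml k : nat).
Local Notation cg k u := (cong R n k u).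
Local Notation s := (size a).
Local Notation u := (a ++ U ++ b).
Local Notation v := (a ++ V ++ b).
Local Notation k' := (ml.+1 * n)%N.
Hypotheses (hU : size U = ml) (hV : size V = ml) (hk : k = ((size u).+1 * n)%N).
Variable f : {mpoly R[k']} -> {mpoly R[k']}.
Hypothesis fC : forall p q, cg k' U p q -> cg k' V (f p) (f q).
Hypothesis fD : forall p q, cg k' V (f (p + q)) (f p + f q).
Hypothesis fB : forall (a0 b0 : {mpoly R[n]}) p,
  cg k' V (f (emb R n k' 0 a0 * p * emb R n k' ml b0))
          (emb R n k' 0 a0 * f p * emb R n k' ml b0).

(* A monomial of [B_u] splits into the factors on the blocks before, inside and
   after the braid window [s, s + ml]; [liftMor] applies [f] to the middle one. *)
Definition substA (t : 'I_k) : {mpoly R[k]} := if (t %/ n < s)%N then 'X_t else 1.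
Definition substM (t : 'I_k) : {mpoly R[k']} :=
  if (s <= t %/ n <= s + ml)%N then bvar R n k' (t %/ n - s) (t %% n) else 1.
Definition substC (t : 'I_k) : {mpoly R[k]} := if (s + ml < t %/ n)%N then 'X_t else 1.
Local Notation mA := (msubst substA).
Local Notation mM := (msubst substM).
Local Notation mC := (msubst substC).
Local Notation shift := (shiftP R n k' k s).

Definition fshift (q : {mpoly R[k']}) : {mpoly R[k]} := shift (f q).
Definition liftmon (m : 'X_{1..k}) : {mpoly R[k]} :=
  mA 'X_[m] * fshift (mM 'X_[m]) * mC 'X_[m].

Lemma liftMorE p : liftMor R n k ml s f p = mlinext liftmon p.
Proof.
apply: eq_bigr => m _; rewrite /liftmon /fshift !mmapX /partA /partM /partC.
by rewrite !prod_mmap1.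
Qed.

Lemma size_window_swap : size v = size u.
Proof. by rewrite !size_cat hU hV. Qed.

Lemma window_le_size : (s + ml <= size u)%N.
Proof. by rewrite !size_cat hU addnA leq_addr. Qed.

Lemma block_le_width bb : (bb <= size u)%N -> (bb.+1 * n <= k)%N.
Proof. by move=> h; rewrite hk leq_mul2r ltnS h orbT. Qed.

Lemma substA_emb bb mu : (bb <= size u)%N ->
  mA (emb R n k bb 'X_[mu]) = if (bb < s)%N then emb R n k bb 'X_[mu] else 1.
Proof.
move=> hb; rewrite (mmap_emb _ (block_le_width hb)) /emb -mmap_condX; apply: eq_mmap => j.
by rewrite /substA /= block_divn // (bvarE R (bvar_index_lt (ltn_ord j) (block_le_width hb))).
Qed.

Lemma substC_emb bb mu : (bb <= size u)%N ->
  mC (emb R n k bb 'X_[mu]) = if (s + ml < bb)%N then emb R n k bb 'X_[mu] else 1.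
Proof.
move=> hb; rewrite (mmap_emb _ (block_le_width hb)) /emb -mmap_condX; apply: eq_mmap => j.
by rewrite /substC /= block_divn // (bvarE R (bvar_index_lt (ltn_ord j) (block_le_width hb))).
Qed.

Lemma substM_emb bb mu : (bb <= size u)%N ->
  mM (emb R n k bb 'X_[mu]) =
    if (s <= bb <= s + ml)%N then emb R n k' (bb - s) 'X_[mu] else 1.
Proof.
move=> hb; rewrite (mmap_emb _ (block_le_width hb)) /emb -mmap_condX; apply: eq_mmap => j.
by rewrite /substM /= block_divn // block_modn.
Qed.

Lemma shiftP_emb g P : (g <= ml)%N -> shift (emb R n k' g P) = emb R n k (s + g) P.
Proof.
move=> hg; have hb : (g.+1 * n <= k')%N by rewrite leq_mul2r ltnS hg orbT.
rewrite /shiftP (mmap_emb _ hb); apply: eq_mmap => j.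
by rewrite /= block_divn // block_modn.
Qed.

Lemma shiftPB p q : shift (p - q) = shift p - shift q.
Proof. exact: raddfB. Qed.

Lemma shiftPM p q : shift (p * q) = shift p * shift q.
Proof. exact: rmorphM. Qed.

Lemma shiftP_sum (I : Type) (r : seq I) (c : I -> R) (q : I -> {mpoly R[k']}) :
  shift (\sum_(i <- r) c i *: q i) = \sum_(i <- r) c i *: shift (q i).
Proof.
rewrite /shiftP raddf_sum; apply: eq_bigr => i _ /=.
by rewrite mmapZ mul_mpolyC.
Qed.

Lemma nth_in_window t : (t < ml)%N ->
  nth 0%N u (s + t) = nth 0%N U t /\ nth 0%N v (s + t) = nth 0%N V t.
Proof.
move=> ht; have e W c : nth 0%N (a ++ W ++ c) (s + t) = nth 0%N (W ++ c) t.
  by rewrite nth_cat ltnNge leq_addr /= addKn.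
by rewrite !e !nth_cat hU hV ht.
Qed.

Lemma nth_off_window t : (t < s)%N || (s + ml <= t)%N -> nth 0%N u t = nth 0%N v t.
Proof.
case/orP => ht; first by rewrite !nth_cat ht.
have hs : (s <= t)%N by apply: leq_trans ht; rewrite leq_addr.
by rewrite !nth_cat ltnNge hs /= hU hV ltnNge leq_subRL // ht.
Qed.

Lemma shiftP_ideal r : bs_ideal R n k' V r -> bs_ideal R n k v (shift r).
Proof.
elim=> {r}.
- by rewrite /shiftP raddf0; apply: bs_ideal0.
- move=> g [t [P [ht [hP ->]]]]; rewrite shiftPB !shiftP_emb -?hV //; last exact: ltnW.
  apply: bs_ideal_gen; exists (s + t)%N, P; split.
    by rewrite size_window_swap (leq_trans _ window_le_size) // ltn_add2l -hV.
  by rewrite addnS (nth_in_window _).2 -?hV.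
- by move=> x y _ hx _ hy; rewrite /shiftP raddfD; apply: bs_idealD.
- by move=> r0 x _ hx; rewrite shiftPM; apply: bs_idealM.
Qed.

Lemma shiftP_cong p q : cg k' V p q -> cg k v (shift p) (shift q).
Proof. by move/congP/shiftP_ideal; rewrite shiftPB => /congP. Qed.

Lemma braid_mor0 : cg k' V (f 0) 0.
Proof.
have := fD 0 0; rewrite addr0 => /congP h; apply/congP.
by rewrite subr0; have := bs_idealN h; rewrite opprB addrK.
Qed.

Lemma braid_morZ c p : cg k' V (f (c *: p)) (c *: f p).
Proof. by have := fB c%:MP 1 p; rewrite !emb1 embC !mulr1 !mul_mpolyC. Qed.

Lemma braid_mor_sum (I : Type) (r : seq I) (c : I -> R) (q : I -> {mpoly R[k']}) :
  cg k' V (f (\sum_(i <- r) c i *: q i)) (\sum_(i <- r) c i *: f (q i)).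
Proof.
elim: r => [|i r ih]; first by rewrite !big_nil; apply: braid_mor0.
by rewrite !big_cons; apply: cong_trans (fD _ _) _; apply: congD => //; apply: braid_morZ.
Qed.

Lemma fshift_cong p q : cg k' U p q -> cg k v (fshift p) (fshift q).
Proof. by move=> h; apply/shiftP_cong/fC. Qed.

Lemma fshift_sum (I : Type) (r : seq I) (c : I -> R) (q : I -> {mpoly R[k']}) :
  cg k v (fshift (\sum_(i <- r) c i *: q i)) (\sum_(i <- r) c i *: fshift (q i)).
Proof. by rewrite /fshift -shiftP_sum; apply/shiftP_cong/braid_mor_sum. Qed.

Lemma fshift_embl P q : cg k v (fshift (emb R n k' 0 P * q)) (emb R n k s P * fshift q).
Proof.
have := shiftP_cong (fB P 1 q).
by rewrite emb1 !mulr1 shiftPM (@shiftP_emb 0 P (leq0n ml)) addn0.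
Qed.

Lemma fshift_embr P q :
  cg k v (fshift (q * emb R n k' ml P)) (fshift q * emb R n k (s + ml) P).
Proof.
have := shiftP_cong (fB 1 P q).
by rewrite emb1 !mul1r shiftPM (@shiftP_emb ml P (leqnn ml)).
Qed.

Lemma mlinext_mul_emb m bb P : (bb <= size u)%N ->
  mlinext liftmon ('X_[m] * emb R n k bb P) = \sum_(mu <- msupp P) P@_mu *:
    (mA 'X_[m] * mA (emb R n k bb 'X_[mu]) *
     fshift (mM 'X_[m] * mM (emb R n k bb 'X_[mu])) *
     (mC 'X_[m] * mC (emb R n k bb 'X_[mu]))).
Proof.
move=> hb; rewrite (emb_sum k bb P) mulr_sumr mlinext_sum; apply: eq_bigr => mu _.
rewrite -scalerAr mlinextZ; congr (_ *: _).
have [m' e] : is_monomial ('X_[m] * emb R n k bb 'X_[mu]).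
  by apply: is_monomialM; [exists m | apply/is_monomial_emb/block_le_width].
by rewrite e mlinextX /liftmon -e !rmorphM.
Qed.

Lemma mlinext_emb_outside m bb P : (bb < s)%N || (s + ml < bb <= size u)%N ->
  mlinext liftmon ('X_[m] * emb R n k bb P) = emb R n k bb P * liftmon m.
Proof.
move=> hb; have hbu : (bb <= size u)%N.
  case/orP: hb => [/ltnW h|/andP [_ //]].
  by apply: leq_trans h (leq_trans _ window_le_size); rewrite leq_addr.
rewrite mlinext_mul_emb // [in RHS](emb_sum k bb P) mulr_suml; apply: eq_bigr => mu _.
rewrite -scalerAl (substA_emb mu hbu) (substM_emb mu hbu) (substC_emb mu hbu) /liftmon.
congr (_ *: _); case/orP: hb => [hb|/andP [hb _]].
  rewrite hb leqNgt hb /= ltnNge (leq_trans (ltnW hb)) ?leq_addr //= !mulr1.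
  by rewrite -!mulrA mulrCA.
have hs : (s <= bb)%N := leq_trans (leq_addr ml s) (ltnW hb).
by rewrite (ltnNge bb s) hs (leqNgt bb) hb /= !mulr1 mulrA mulrC.
Qed.

Lemma mlinext_emb_window m bb P : (s <= bb <= s + ml)%N ->
  cg k v (mlinext liftmon ('X_[m] * emb R n k bb P))
         (mA 'X_[m] * fshift (mM 'X_[m] * emb R n k' (bb - s) P) * mC 'X_[m]).
Proof.
move=> hb; have hbu : (bb <= size u)%N := leq_trans (proj2 (andP hb)) window_le_size.
rewrite mlinext_mul_emb //.
under eq_bigr => mu _ do
  rewrite (substA_emb mu hbu) (substM_emb mu hbu) (substC_emb mu hbu) hb
          ltnNge (proj1 (andP hb)) /= ltnNge (proj2 (andP hb)) /= !mulr1.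
rewrite mulr_sandwich_sum; apply/congMr/congMl/cong_sym.
rewrite (emb_sum k' (bb - s) P) mulr_sumr.
under eq_bigr => mu _ do rewrite -scalerAr.
exact: fshift_sum.
Qed.

Lemma mlinext_emb_edge m bb P : bb = s \/ bb = (s + ml)%N ->
  cg k v (mlinext liftmon ('X_[m] * emb R n k bb P)) (emb R n k bb P * liftmon m).
Proof.
move=> hb; have hw : (s <= bb <= s + ml)%N by case: hb => ->; rewrite leqnn leq_addr.
apply: cong_trans (mlinext_emb_window m P hw) _; rewrite /liftmon.
case: hb => ->.
  rewrite subnn (mulrC (mM _)).
  apply: cong_trans (congMr _ (congMl _ (fshift_embl P (mM 'X_[m])))) _.
  by rewrite -!mulrA mulrCA; apply: cong_refl.
rewrite addKn; apply: cong_trans (congMr _ (congMl _ (fshift_embr P (mM 'X_[m])))) _.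
by rewrite mulrA mulrAC mulrC; apply: cong_refl.
Qed.

Lemma mlinext_emb_outer m bb P : (bb <= s)%N || (s + ml <= bb <= size u)%N ->
  cg k v (mlinext liftmon ('X_[m] * emb R n k bb P)) (emb R n k bb P * liftmon m).
Proof.
move=> hb; have [e|ne] := boolP ((bb == s) || (bb == s + ml)).
  by apply: mlinext_emb_edge; case/orP: e => /eqP ->; [left | right].
by rewrite mlinext_emb_outside; [apply: cong_refl | move: hb ne; lia].
Qed.

Lemma mlinext_gen m t P : (t < size u)%N -> Defs.invariant R n (nth 0%N u t) P ->
  cg k v (mlinext liftmon ('X_[m] * (emb R n k t P - emb R n k t.+1 P))) 0.
Proof.
move=> ht hP; rewrite mulrBr mlinextB; apply/congP; rewrite subr0; apply/congP.
have [/andP [h0 h1]|hout] := boolP ((s <= t < s + ml)%N).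
  have hw c : (c == t) || (c == t.+1) -> (s <= c <= s + ml)%N by lia.
  apply: cong_trans (mlinext_emb_window m P (hw t _)) _; first by rewrite eqxx.
  apply: cong_sym; apply: cong_trans (mlinext_emb_window m P (hw t.+1 _)) _.
    by rewrite eqxx orbT.
  apply/congMr/congMl/fshift_cong/congMl/cong_sym; rewrite subSn //.
  apply: cong_emb; first by rewrite hU ltn_subLR.
  by rewrite -(nth_in_window _).1 ?subnKC // ltn_subLR.
have ho c : (c == t) || (c == t.+1) -> (c <= s)%N || (s + ml <= c <= size u)%N by lia.
apply: cong_trans (mlinext_emb_outer m P (ho t _)) _; first by rewrite eqxx.
apply: cong_sym; apply: cong_trans (mlinext_emb_outer m P (ho t.+1 _)) _.
  by rewrite eqxx orbT.
apply/congMr/cong_sym/cong_emb; first by rewrite size_window_swap.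
by rewrite -nth_off_window //; lia.
Qed.

Lemma mlinext_ideal x : bs_ideal R n k u x ->
  forall r, cg k v (mlinext liftmon (r * x)) 0.
Proof.
elim=> {x} [r|g [t [P [ht [hP ->]]]] r|x y _ hx _ hy r|r0 x _ hx r].
- by rewrite mulr0 mlinext0; apply: cong_refl.
- elim/mpolyind: r => [|c m r _ _ ih]; first by rewrite mul0r mlinext0; apply: cong_refl.
  rewrite mulrDl mlinextD -scalerAl mlinextZ.
  apply: cong_trans (congD (congZ c (mlinext_gen m ht hP)) ih) _.
  by rewrite scaler0 addr0; apply: cong_refl.
- by rewrite mulrDr mlinextD -[0]addr0; apply: congD.
- by rewrite mulrA; apply: hx.
Qed.

Theorem liftMor_cong p q : cg k u p q ->
  cg k v (liftMor R n k ml s f p) (liftMor R n k ml s f q).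
Proof.
move/congP/mlinext_ideal/(_ 1); rewrite mul1r mlinextB !liftMorE => h.
by apply/congP; move/congP: h; rewrite subr0.
Qed.

End Lift.

Section Distant.
Variables (R : realType) (n : nat) (a b : seq nat) (i j k : nat).
Local Notation cg k u := (cong R n k u).
Local Notation s := (size a).
Local Notation u := (a ++ [:: i; j] ++ b).
Local Notation v := (a ++ [:: j; i] ++ b).
Local Notation k' := (2.+1 * n)%N.
Local Notation shift := (shiftP R n k' k s).
Hypotheses (hij : ((i.+1 < j) || (j.+1 < i))%N) (hk : k = ((size u).+1 * n)%N).
Variable f : {mpoly R[k']} -> {mpoly R[k']}.
Hypothesis fC : forall p q, cg k' [:: i; j] p q -> cg k' [:: j; i] (f p) (f q).
Hypothesis fD : forall p q, cg k' [:: j; i] (f (p + q)) (f p + f q).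
Hypothesis fB : forall (a0 b0 : {mpoly R[n]}) p,
  cg k' [:: j; i] (f (emb R n k' 0 a0 * p * emb R n k' 2 b0))
                  (emb R n k' 0 a0 * f p * emb R n k' 2 b0).
Hypothesis f1 : cg k' [:: j; i] (f 1) 1.

(* In [B_i B_j] with [i], [j] distant, each middle variable [x^(1)_(t+1)] equals
   an outer one: [x^(2)_(t+1)] if [s_i] moves it (then [s_j] does not), and
   [x^(0)_(t+1)] otherwise. *)
Definition drop_mid (t : 'I_k') : {mpoly R[k']} :=
  if (t %/ n == 1)%N then
    (if touches (t %% n) i then bvar R n k' 2 (t %% n) else bvar R n k' 0 (t %% n))
  else 'X_t.

Lemma drop_mid_cong q : cg k' [:: i; j] q (msubst drop_mid q).
Proof.
rewrite -{1}(mmap_id q); apply: cong_mmap => t; rewrite /drop_mid.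
case: eqP => e; last exact: cong_refl.
have ht : (t %% n < n)%N by rewrite ltn_mod (block_width_gt0 t (erefl k')).
rewrite -(bvar_divmod R n t) e !(bvar_emb R _ _ ht); case: ifP => hti.
  by apply: cong_emb => //; apply: invariant_var; apply: touches_distant hti.
by apply/cong_sym/cong_emb => //; apply: invariant_var; rewrite /= hti.
Qed.

Definition is_outer (y : {mpoly R[k']}) :=
  exists al be : {mpoly R[n]}, y = emb R n k' 0 al * emb R n k' 2 be.

Lemma is_outer1 : is_outer 1.
Proof. by exists 1, 1; rewrite !emb1 mulr1. Qed.

Lemma is_outerM y z : is_outer y -> is_outer z -> is_outer (y * z).
Proof.
case=> [a1 [b1 ->]] [a2 [b2 ->]]; exists (a1 * a2), (b1 * b2).
by rewrite !embM mulrACA.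
Qed.

Lemma is_outer_mmap1 (m : 'X_{1..k'}) : is_outer (mmap1 drop_mid m).
Proof.
apply: (big_ind is_outer is_outer1 is_outerM) => t _.
elim: (m t) => [|e ih]; rewrite ?expr0 ?exprS; [exact: is_outer1 | apply: is_outerM => //].
have ht : (t %% n < n)%N by rewrite ltn_mod (block_width_gt0 t (erefl k')).
rewrite /drop_mid; case: eqP => e1.
  case: ifP => _; rewrite (bvar_emb R _ _ ht).
    by exists 1, 'X_(Ordinal ht); rewrite emb1 mul1r.
  by exists 'X_(Ordinal ht), 1; rewrite emb1 mulr1.
rewrite -(bvar_divmod R n t) (bvar_emb R _ _ ht).
move: (block_ord_le t (erefl k')) e1; case: (t %/ n)%N => [|[|[|]]] // _ _.
  by exists 'X_(Ordinal ht), 1; rewrite emb1 mulr1.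
by exists 1, 'X_(Ordinal ht); rewrite emb1 mul1r.
Qed.

Lemma braid_mor_outer y : is_outer y -> cg k' [:: j; i] (f y) y.
Proof.
case=> [al [be ->]]; have := fB al be 1; rewrite mulr1 => h.
apply: cong_trans h _; rewrite -{2}[emb R n k' 0 al]mulr1.
by apply: congMr; apply: congMl; exact: f1.
Qed.

Lemma braid_mor_distant q : cg k' [:: j; i] (f q) (msubst drop_mid q).
Proof.
apply: cong_trans (fC (drop_mid_cong q)) _.
have -> : msubst drop_mid q = \sum_(m <- msupp q) q@_m *: mmap1 drop_mid m.
  by apply: eq_bigr => m _; rewrite mul_mpolyC.
apply: cong_trans (braid_mor_sum fD fB _ _ _) _.
by apply: cong_sum => m _; apply/congZ/braid_mor_outer/is_outer_mmap1.
Qed.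

Definition dedge_subst (t : 'I_k) : {mpoly R[k]} :=
  if (t %/ n == s.+1)%N then
    (if touches (t %% n) i then bvar R n k (s + 2) (t %% n) else bvar R n k s (t %% n))
  else 'X_t.

Lemma dedge_substE (t : 'I_k) :
  substA R n a t * shift (msubst drop_mid (substM R n a 2 t)) *
  substC R n a 2 t = dedge_subst t.
Proof.
have ht : (t %% n < n)%N by rewrite ltn_mod (block_width_gt0 t hk).
rewrite /substA /substM /substC /dedge_subst.
case: (ltnP (t %/ n) s) => h1.
  rewrite ltnNge (leq_trans (ltnW h1)) ?leq_addr //= (_ : (t %/ n == s.+1)%N = false).
    by rewrite rmorph1 /shiftP rmorph1 !mulr1.
  by apply/negbTE; rewrite neq_ltn (ltn_trans h1).
case: (ltnP (s + 2) (t %/ n)) => h2.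
  rewrite /= (_ : (t %/ n == s.+1)%N = false); first by rewrite rmorph1 /shiftP rmorph1 !mul1r.
  by apply/negbTE; rewrite neq_ltn (leq_trans _ h2) ?orbT // addn2 ltnS.
have hg : (t %/ n - s <= 2)%N by rewrite leq_subLR.
have hid : ((t %/ n - s) * n + t %% n < k')%N.
  by apply: bvar_index_lt; rewrite // leq_mul2r ltnS hg orbT.
rewrite /= mul1r mulr1 (mmap_bvar _ hid) /drop_mid /= block_divn // block_modn //.
have -> : (t %/ n - s == 1)%N = (t %/ n == s.+1)%N by apply/eqP/eqP; lia.
case: eqP => e; first by case: ifP => _; rewrite !bvar_emb shiftP_emb // addn0.
rewrite -(bvarE R hid) bvar_emb shiftP_emb // subnKC // -bvar_emb.
exact: bvar_divmod.
Qed.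

Lemma liftmon_dedge m : cg k v (liftmon a f m) (msubst dedge_subst 'X_[m]).
Proof.
rewrite /liftmon /fshift.
have hshift := @shiftP_cong R n a b [:: i; j] [:: j; i] 2 k erefl erefl.
apply: cong_trans (congMr _ (congMl _ (hshift _ _ (braid_mor_distant _)))) _.
have -> : shift (msubst drop_mid (msubst (@substM R n a 2 k) 'X_[m])) =
    msubst (fun t => shift (msubst drop_mid (substM R n a 2 t))) 'X_[m].
  by rewrite mmap_comp /shiftP mmap_comp.
by rewrite mmapX_mul3 (eq_mmap _ dedge_substE); apply: cong_refl.
Qed.

Theorem liftMor_dedge x : cg k v (liftMor R n k 2 s f x) (msubst dedge_subst x).
Proof.
rewrite liftMorE; elim/mpolyind: x => [|c m p _ _ ih].
  by rewrite mlinext0 raddf0; apply: cong_refl.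
rewrite mlinextD mlinextZ mlinextX raddfD /= mmapZ mul_mpolyC.
by apply: congD => //; apply/congZ/liftmon_dedge.
Qed.

Lemma ntouch_dedge bb t : bb != s.+1 -> ntouch u bb t = ntouch v bb t.
Proof.
move=> hb; rewrite /ntouch !take_cat; case: ltnP => // h.
rewrite !count_cat; congr (_ + _)%N.
move: hb; rewrite -(subnKC h) addKn; case: (bb - s)%N => [|[|d]] //=.
  by rewrite addn1 eqxx.
by move=> _; rewrite !subSS subn0 /= !addnA [(touches t j + _)%N]addnC.
Qed.

Lemma ntouch_subst_dedge : ntouch_subst n u v dedge_subst.
Proof.
move=> t; have hn := block_width_gt0 t hk.
have hd := block_ord_le t hk.
have hsv : size v = size u by rewrite !size_cat.
have hs2 : (s + 2 <= size u)%N by rewrite !size_cat /= addnA leq_addr.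
rewrite /dedge_subst; case: eqP => e; last first.
  by exists (t %/ n)%N; rewrite hsv bvar_divmod ntouch_dedge //; apply/eqP.
have tk x : take s (a ++ x) = a by rewrite take_cat ltnn subnn take0 cats0.
have tkD c d : take (s + d) (a ++ c) = a ++ take d c.
  by rewrite take_cat ltnNge leq_addr /= addKn.
case: ifP => ht.
  exists (s + 2)%N; split; rewrite ?hsv //.
  rewrite e /ntouch -[s.+1]addn1 !tkD !count_cat /= take0 ht.
  by rewrite (negbTE (touches_distant hij ht)) /=; lia.
exists s; split; rewrite ?hsv ?(leq_trans _ hs2) ?leq_addr //.
by rewrite e /ntouch -[s.+1]addn1 -{1}[s]addn0 !tkD !count_cat /= ht !addn0.
Qed.

End Distant.

Lemma size_altw i j m : size (altw i j m) = m.
Proof. by elim: m i j => [|m ih] i j //=; rewrite ih. Qed.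

Lemma altw_cons i j m : (0 < m)%N -> altw i j m = i :: altw j i m.-1.
Proof. by case: m. Qed.

Lemma mlen_gt0 i j : (0 < mlen i j)%N.
Proof. by rewrite /mlen; case: ifP. Qed.

Lemma mlen_distant i j : ((i.+1 < j) || (j.+1 < i))%N -> mlen i j = 2.
Proof.
by rewrite /mlen => hij; case: eqP => [e|_]; [|case: eqP => // e]; move: hij; rewrite e; lia.
Qed.

Lemma find_first_diff (a c1 c2 : seq nat) x y : x != y ->
  find (fun t => nth 0%N (a ++ x :: c1) t != nth 0%N (a ++ y :: c2) t)
       (iota 0 (size (a ++ x :: c1))) = size a.
Proof.
move=> hxy; rewrite size_cat /= iotaD find_cat ifF; last first.
  by apply/negbTE/hasPn => t; rewrite mem_iota add0n /= => ht; rewrite !nth_cat ht eqxx.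
by rewrite size_iota /= add0n !nth_cat ltnn subnn /= hxy addn0.
Qed.

Lemma edgeMorE (R : realType) n k F (a c1 c2 : seq nat) x y : x != y ->
  edgeMor R n k F (a ++ x :: c1) (a ++ y :: c2) = liftMor R n k (mlen x y) (size a) (F x y).
Proof. by move=> hxy; rewrite /edgeMor find_first_diff // !nth_cat ltnn subnn. Qed.

Lemma edgeMor_braid (R : realType) n k F (a b : seq nat) i j : i != j ->
  edgeMor R n k F (a ++ altw i j (mlen i j) ++ b) (a ++ altw j i (mlen i j) ++ b) =
  liftMor R n k (mlen i j) (size a) (F i j).
Proof. by move=> hij; rewrite !(@altw_cons _ _ (mlen i j)) ?mlen_gt0 // edgeMorE. Qed.

Lemma isRex_size n (w : 'S_n) u v : isRex w u -> isRex w v -> size u = size v.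
Proof. by case=> hu mu [hv mv]; apply/eqP; rewrite eqn_leq (mu _ hv) (mv _ hu). Qed.

Lemma isRex_letter n (w : 'S_n) u l : isRex w u -> l \in u -> (0 < l < n)%N.
Proof. by case=> [[/allP hv _] _] /hv. Qed.

Definition braid_move (u v : seq nat) : Prop := aedge u v \/ dedge u v.

Lemma braid_moveP n (w : 'S_n) u v : isRex w u -> braid_move u v ->
  exists a b i j, [/\ (0 < i < n)%N, (0 < j < n)%N, i != j,
    u = a ++ altw i j (mlen i j) ++ b & v = a ++ altw j i (mlen i j) ++ b].
Proof.
move=> hu [[a [b [i [[eu ev]|[eu ev]]]]] | [a [b [i [j [hij [eu ev]]]]]]]; subst u v.
- exists a, b, i, i.+1; rewrite /mlen eqxx orbT neq_ltn ltnSn.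
  by split => //; apply: isRex_letter hu _; rewrite mem_cat !inE eqxx ?orbT.
- exists a, b, i.+1, i; rewrite /mlen eqxx neq_ltn ltnSn orbT.
  by split => //; apply: isRex_letter hu _; rewrite mem_cat !inE eqxx ?orbT.
exists a, b, i, j; rewrite mlen_distant //; split => //.
- by apply: isRex_letter hu _; rewrite mem_cat !inE eqxx ?orbT.
- by apply: isRex_letter hu _; rewrite mem_cat !inE eqxx ?orbT.
by apply/eqP => e; move: hij; rewrite e; lia.
Qed.

Lemma chain_dedge_braid u vs : chain dedge u vs -> chain braid_move u vs.
Proof. by elim: vs u => [|v vs ih] u //= [h /ih]; split; [right|]. Qed.

Lemma adjSteps_distant u vs : adjSteps (steps u vs) [::] -> chain dedge u vs.
Proof. by elim: vs u => [|v vs ih] u //= [[_ [es' []]] | [he /ih]]. Qed.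

Lemma adjSteps_split u vs a0 b0 es : adjSteps (steps u vs) ((a0, b0) :: es) ->
  exists d rest, [/\ vs = d ++ b0 :: rest, adjSteps (steps u d) [::], last u d = a0,
    aedge a0 b0 & adjSteps (steps b0 rest) es].
Proof.
elim: vs u => [|v vs ih] u //=.
case=> [[ha [es' [[-> -> ->] h]]] | [hd /ih [d [rest [-> h1 h2 h3 h4]]]]].
  by exists [::], vs.
by exists (v :: d), rest; split=> //; right.
Qed.

Lemma pathMor_cat (R : realType) n k F d u b0 rest x :
  pathMor R n k F (u :: d ++ b0 :: rest) x =
  pathMor R n k F (b0 :: rest) (edgeMor R n k F (last u d) b0 (pathMor R n k F (u :: d) x)).
Proof. by elim: d u x => [|v d ih] u x //; exact: ih. Qed.

Lemma lexle_anti r v : lexle r v -> lexle v r -> r = v.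
Proof.
elim: r v => [|x r ih] [|y v] //=.
case/orP=> [h1|/andP [/eqP e1 h1]] /orP [h2|/andP [/eqP e2 h2]]; try lia.
by rewrite e1 (ih v).
Qed.

Lemma isRep_unique n (w : 'S_n) C r1 r2 : isRep w C r1 -> isRep w C r2 -> r1 = r2.
Proof. by case=> [h1 [c1 m1]] [h2 [c2 m2]]; apply: lexle_anti; [apply: m1 | apply: m2]. Qed.

Section Walks.
Variables (R : realType) (n : nat) (w : 'S_n).
Variable F : forall i j : nat, PR R ((mlen i j).+1 * n) -> PR R ((mlen i j).+1 * n).
Hypothesis hF : forall i j : nat, (0 < i < n)%N -> (0 < j < n)%N -> i != j ->
  isBraidMor R n i j (@F i j).
Local Notation cg k u := (cong R n k u).
Local Notation pmor k := (pathMor R n k F).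

Definition all_rex (p : seq (seq nat)) := forall z, z \in p -> isRex w z.

Lemma all_rex_cons u vs : all_rex (u :: vs) -> isRex w u /\ all_rex vs.
Proof. by move=> h; split=> [|z hz]; apply: h; rewrite inE ?eqxx ?hz ?orbT. Qed.

Lemma all_rex_last u vs : all_rex (u :: vs) -> isRex w (last u vs).
Proof.
by move=> h; apply: h; rewrite inE; case: vs => [|z zs] /=; rewrite ?eqxx // mem_last orbT.
Qed.

Lemma all_rex_cat u d rest : all_rex (u :: d ++ rest) -> all_rex (u :: d) /\ all_rex rest.
Proof.
move=> h; split=> z hz; apply: h.
  by move: hz; rewrite !inE mem_cat => /orP [->|->]; rewrite ?orbT.
by rewrite inE mem_cat hz !orbT.
Qed.

Lemma edgeMor_cong k u v x y : isRex w u -> braid_move u v ->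
  k = ((size u).+1 * n)%N -> cg k u x y ->
  cg k v (edgeMor R n k F u v x) (edgeMor R n k F u v y).
Proof.
move=> hu /(braid_moveP hu) [a [b [i [j [hi hj hij -> ->]]]]] hk.
have [fC fD fB _ _] := hF hi hj hij.
by rewrite !edgeMor_braid //; apply: liftMor_cong; rewrite ?size_altw.
Qed.

Lemma pathMor_cong k u vs x y : all_rex (u :: vs) ->
  chain braid_move u vs -> k = ((size u).+1 * n)%N -> cg k u x y ->
  cg k (last u vs) (pmor k (u :: vs) x) (pmor k (u :: vs) y).
Proof.
elim: vs u x y => [|v vs ih] u x y hall hch hk hxy //; case: hch => he hch.
have [hu hall'] := all_rex_cons hall; have [hv _] := all_rex_cons hall'.
apply: ih => //; first by rewrite (isRex_size hv hu).
exact: edgeMor_cong.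
Qed.

Lemma edgeMor_dedge k u v : isRex w u -> dedge u v -> k = ((size u).+1 * n)%N ->
  exists phi, ntouch_subst n u v phi /\
    forall x, cg k v (edgeMor R n k F u v x) (msubst phi x).
Proof.
move=> hu [a [b [i [j [hij [eu ev]]]]]] hk; subst u v.
have hi : (0 < i < n)%N by apply: isRex_letter hu _; rewrite mem_cat !inE eqxx ?orbT.
have hj : (0 < j < n)%N by apply: isRex_letter hu _; rewrite mem_cat !inE eqxx ?orbT.
have hne : i != j by apply/eqP => e; move: hij; rewrite e; lia.
exists (dedge_subst R n a i (k := k)); split; first exact: ntouch_subst_dedge.
move=> x; rewrite edgeMorE //.
have := hF hi hj hne; move: (@F i j); rewrite /isBraidMor.
move: (mlen i j) (mlen_distant hij) => ml -> f [fC fD fB _ f1].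
exact: liftMor_dedge.
Qed.

Lemma distant_walk k u vs : all_rex (u :: vs) -> chain dedge u vs ->
  k = ((size u).+1 * n)%N ->
  exists phi, ntouch_subst n u (last u vs) phi /\
    forall x, cg k (last u vs) (pmor k (u :: vs) x) (msubst phi x).
Proof.
elim: vs u => [|v vs ih] u hall hch hk.
  exists (fun t => 'X_t); split; first exact: ntouch_subst_id.
  by move=> x; rewrite mmap_id; apply: cong_refl.
have [hu hall'] := all_rex_cons hall; have [hv _] := all_rex_cons hall'.
case: hch => hd hch.
have hk' : k = ((size v).+1 * n)%N by rewrite (isRex_size hv hu).
have [psi [hpsi epsi]] := edgeMor_dedge hu hd hk.
have [phi [hphi ephi]] := ih v hall' hch hk'.
exists (fun t => msubst phi (psi t)); split.
  exact: ntouch_subst_comp hk' hpsi hphi.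
move=> x; rewrite -mmap_comp; apply: cong_trans (ephi _).
by apply: pathMor_cong (epsi x) => //; apply: chain_dedge_braid.
Qed.

Lemma distant_walks_cong k u vs vs' x y : all_rex (u :: vs) -> all_rex (u :: vs') ->
  chain dedge u vs -> chain dedge u vs' -> last u vs = last u vs' ->
  k = ((size u).+1 * n)%N -> cg k u x y ->
  cg k (last u vs) (pmor k (u :: vs) x) (pmor k (u :: vs') y).
Proof.
move=> h1 h2 d1 d2 el hk hxy.
have [phi1 [s1 e1]] := distant_walk h1 d1 hk.
have [phi2 [s2 e2]] := distant_walk h2 d2 hk.
have hkl : k = ((size (last u vs)).+1 * n)%N.
  by rewrite (isRex_size (all_rex_last h1) (proj1 (all_rex_cons h1))).
apply: cong_trans (e1 x) _; rewrite el in s1 hkl *.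
apply: cong_trans (ntouch_subst_cong x hkl s1 s2) _.
apply: cong_trans (cong_sym (e2 x)) _.
by apply: pathMor_cong hxy => //; apply: chain_dedge_braid.
Qed.

Lemma walks_cong k es u vs vs' x y : all_rex (u :: vs) -> all_rex (u :: vs') ->
  adjSteps (steps u vs) es -> adjSteps (steps u vs') es -> last u vs = last u vs' ->
  k = ((size u).+1 * n)%N -> cg k u x y ->
  cg k (last u vs) (pmor k (u :: vs) x) (pmor k (u :: vs') y).
Proof.
elim: es u vs vs' x y => [|[a0 b0] es ih] u vs vs' x y h1 h2 a1 a2 el hk hxy.
  by apply: distant_walks_cong => //; apply: adjSteps_distant.
have [d [rest [ev ad ld ae ar]]] := adjSteps_split a1.
have [d' [rest' [ev' ad' ld' _ ar']]] := adjSteps_split a2; subst vs vs'.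
have [h1a h1b] := all_rex_cat h1; have [h2a h2b] := all_rex_cat h2.
rewrite !pathMor_cat ld ld'; rewrite !last_cat /= in el *.
have hu := proj1 (all_rex_cons h1); have hb0 := proj1 (all_rex_cons h1b).
have ha0 : isRex w a0 by rewrite -ld; apply: all_rex_last h1a.
apply: ih ar ar' el _ _ => //; first by rewrite (isRex_size hb0 hu).
apply: (edgeMor_cong ha0 (or_introl ae)); first by rewrite (isRex_size ha0 hu).
have := distant_walks_cong h1a h2a (adjSteps_distant ad) (adjSteps_distant ad')
  (etrans ld (esym ld')) hk hxy.
by rewrite ld.
Qed.

End Walks.

Theorem proposition3p2 (R : realType) (n : nat) (hn : (2 <= n)%N) (w : 'S_n)
  (F : forall i j : nat,
         PR R ((mlen i j).+1 * n) -> PR R ((mlen i j).+1 * n))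
  (hF : forall i j : nat, (0 < i < n)%N -> (0 < j < n)%N -> i != j ->
          isBraidMor R n i j (F i j))
  (E : seq nat -> seq nat -> seq nat * seq nat) (hE : validRedge w E)
  (Cs : seq (seq nat)) (hP : isGpath w Cs)
  (p p' : seq (seq nat)) (hp : isLift w E Cs p) (hp' : isLift w E Cs p') :
  let k := ((size (head [::] Cs)).+1 * n)%N in
  forall x : {mpoly R[k]},
    cong R n k (last [::] p) (pathMor R n k F p x) (pathMor R n k F p' x).
Proof.
move=> k x.
case: Cs hP hp hp' @k x => [|C1 Cs'] // hP hp hp' k x.
case: p hp => [|v0 vs] // [hall [hr1 [hr2 hadj]]].
case: p' hp' => [|v0' vs'] // [hall' [hr1' [hr2' hadj']]].
have e0 := isRep_unique hr1 hr1'; subst v0'.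
have hC1 : isRex w C1 by case: hP => h _; apply: h; rewrite inE eqxx.
apply: (walks_cong hF hall hall' hadj hadj' (isRep_unique hr2 hr2')) => //.
  by rewrite /k /= (isRex_size hC1 (hall _ (mem_head _ _))).
exact: cong_refl.
Qed.
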